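(* Let $\pi\in S_n$ and $e=\Theta(\pi)$. Then: (a) $\pi$ avoids the vincular pattern $3\underline{214}$ if and only if $e$ avoids the consecutive pattern $120$; (b) $\pi$ avoids the vincular pattern $2\underline{413}$ if and only if $e$ avoids the consecutive pattern $021$. In particular $|\mathbf{I}_n(120)|=|S_n(3\underline{214})|$ and $|\mathbf{I}_n(021)|=|S_n(2\underline{413})|$ for all $n$.
   Context: $S_n$ is the set of permutations of $[n]$, and $\mathbf{I}_n$ the set of integer sequences $e_1\dots e_n$ with $0\le e_i<i$. $\Theta:S_n\to\mathbf{I}_n$ is the bijection $\pi\mapsto e$ with $e_i=|\{j: j<i,\ \pi_j>\pi_i\}|$. $\pi$ contains $3\underline{214}$ if there exist $j<i$ with $\pi_{i+1}<\pi_i<\pi_j<\pi_{i+2}$; $\pi$ contains $2\underline{413}$ if there exist $j<i$ with $\pi_{i+1}<\pi_j<\pi_{i+2}<\pi_i$; avoiding means not containing, and $S_n(\sigma)$ is the set of permutations avoiding $\sigma$. $e$ avoids the consecutive pattern $120$ if there is no $i$ with $e_{i+2}<e_i<e_{i+1}$, and avoids $021$ if there is no $i$ with $e_i<e_{i+2}<e_{i+1}$; $\mathbf{I}_n(p)$ is the set of $e\in\mathbf{I}_n$ avoiding $p$. *)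

(* Indices are 0-based: position k here is position k+1 in the paper,
   and values of a permutation in 'S_n are 0..n-1 (order-isomorphic to [n]). *)
From mathcomp Require Import all_boot all_fingroup.
Set Implicit Arguments. Unset Strict Implicit. Unset Printing Implicit Defensive.

Definition Theta n (p : 'S_n) (i : 'I_n) : nat :=
  #|[set j : 'I_n | (j < i) && (p i < p j)]|.

(* I_n : integer sequences e_1..e_n with 0 <= e_i < i (1-based), i.e. e_k <= k 0-based;
   entries are then < n so we store them in 'I_n. *)
Definition invseqs n : {set {ffun 'I_n -> 'I_n}} :=
  [set e : {ffun 'I_n -> 'I_n} | [forall i : 'I_n, (e i <= i)%N]].

Definition contains_3_214 n (p : 'S_n) : bool :=
  [exists j : 'I_n, exists i : 'I_n, exists i1 : 'I_n, exists i2 : 'I_n,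
    [&& (j < i)%N, val i1 == i.+1, val i2 == i.+2,
        (p i1 < p i)%N, (p i < p j)%N & (p j < p i2)%N]].

Definition contains_2_413 n (p : 'S_n) : bool :=
  [exists j : 'I_n, exists i : 'I_n, exists i1 : 'I_n, exists i2 : 'I_n,
    [&& (j < i)%N, val i1 == i.+1, val i2 == i.+2,
        (p i1 < p j)%N, (p j < p i2)%N & (p i2 < p i)%N]].

Definition contains_120 n (e : 'I_n -> nat) : bool :=
  [exists i : 'I_n, exists i1 : 'I_n, exists i2 : 'I_n,
    [&& val i1 == i.+1, val i2 == i.+2, (e i2 < e i)%N & (e i < e i1)%N]].

Definition contains_021 n (e : 'I_n -> nat) : bool :=
  [exists i : 'I_n, exists i1 : 'I_n, exists i2 : 'I_n,
    [&& val i1 == i.+1, val i2 == i.+2, (e i < e i2)%N & (e i2 < e i1)%N]].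

From mathcomp Require Import all_boot all_fingroup zify.
Set Implicit Arguments. Unset Strict Implicit.

(* For a permutation p let  larger p v k  count the positions j < k with
   p j > v, so that  Theta p i = larger p (p i) i.  In a window of consecutive
   positions i, i+1, i+2 carrying the values x, y, z, with A := larger p ^~ i,
     Theta i = A x,  Theta (i+1) = A y + [y < x],
     Theta (i+2) = A z + [z < x] + [z < y];
   A is antitone, and for a < b with b not used before i, A b < A a exactly
   when some earlier entry lies strictly between a and b.  A purely arithmetic
   case analysis ([window_120], [window_021]) then shows that Theta has the
   consecutive pattern 120 (resp. 021) at i iff p has 3_214 (resp. 2_413) with
   its underlined entries at i, i+1, i+2: this is parts (a) and (b).  For the
   enumeration, Theta is injective (the relative order of each prefix of p is
   rebuilt from Theta, [Theta_inj]) and both S_n and the inversion sequences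
   have n! elements, so Theta maps each avoidance class onto the other. *)

(* Arithmetic core of (a): A abstracts the antitone count, x, y, z are the
   distinct window values, ex says an earlier value lies between x and z. *)
Lemma window_120 (A : nat -> nat) (x y z : nat) (ex : bool) :
  x != y -> x != z -> y != z ->
  (forall a b, a <= b -> A b <= A a) ->
  (x < z -> (A z < A x) = ex) ->
  ((A z + (z < x) + (z < y) < A x) && (A x < A y + (y < x))) =
    [&& y < x, x < z & ex].
Proof.
move=> nxy nxz nyz mono hex.
have := mono x y; have := mono y x; have := mono x z; have := mono z x.
have := mono y z; have := mono z y; move=> m1 m2 m3 m4 m5 m6.
by case: ex hex => hex; apply/idP/idP; lia.
Qed.

(* Arithmetic core of (b): here ex says an earlier value lies between y and z. *)
Lemma window_021 (A : nat -> nat) (x y z : nat) (ex : bool) :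
  x != y -> x != z -> y != z ->
  (forall a b, a <= b -> A b <= A a) ->
  (y < z -> (A z < A y) = ex) -> (ex -> y < z) ->
  ((A x < A z + (z < x) + (z < y)) &&
   (A z + (z < x) + (z < y) < A y + (y < x))) = (z < x) && ex.
Proof.
move=> nxy nxz nyz mono hex exyz.
have := mono x y; have := mono y x; have := mono x z; have := mono z x.
have := mono y z; have := mono z y; move=> m1 m2 m3 m4 m5 m6.
by case: ex hex exyz => hex exyz; apply/idP/idP; lia.
Qed.

Lemma card_ord_lt n m : m <= n -> #|[set v : 'I_n | v < m]| = m.
Proof.
elim: m => [|m IH] lt_mn.
  by apply/eqP; rewrite cards_eq0; apply/eqP/setP => v; rewrite !inE.
have -> : [set v : 'I_n | v < m.+1] = Ordinal lt_mn |: [set v : 'I_n | v < m].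
  by apply/setP => v; rewrite !inE ltnS leq_eqVlt -val_eqE.
by rewrite cardsU1 IH ?(ltnW lt_mn) // inE /= ltnn.
Qed.

Section Larger.
Variables (n : nat) (p : 'S_n).

Definition larger_set (v k : nat) : {set 'I_n} := [set j : 'I_n | (j < k) && (v < p j)].

Definition larger (v k : nat) : nat := #|larger_set v k|.

Lemma perm_val_neq (a b : 'I_n) : nat_of_ord a != b -> (p a : nat) != p b.
Proof. by move=> ne; apply/eqP => /val_inj/perm_inj ab; rewrite ab eqxx in ne. Qed.

Lemma Theta_larger (i : 'I_n) : Theta p i = larger (p i) i.
Proof. by []. Qed.

Lemma larger_succ (k : 'I_n) v : larger v k.+1 = larger v k + (v < p k).
Proof.
rewrite /larger /larger_set; set S := [set j : 'I_n | (j < k) && (v < p j)].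
have -> : [set j : 'I_n | (j < k.+1) && (v < p j)] =
          if v < p k then k |: S else S.
  apply/setP => j; rewrite !inE ltnS leq_eqVlt.
  have [-> | ne] := eqVneq j k; first
    by rewrite eqxx; case: ifP => h; rewrite ?inE ?eqxx ?ltnn ?h.
  have ne' : (nat_of_ord j == k) = false by apply: contraNF ne => /eqP/val_inj ->.
  by rewrite ne'; case: ifP; rewrite !inE ?(negbTE ne).
by case: ifP => _; rewrite ?addn0 // cardsU1 inE ltnn addnC.
Qed.

Lemma larger_antitone k a b : a <= b -> larger b k <= larger a k.
Proof.
move=> le_ab; apply/subset_leq_card/subsetP => j; rewrite !inE.
by case/andP=> -> /(leq_ltn_trans le_ab).
Qed.

Definition between_before (k a b : nat) : bool :=
  [exists j : 'I_n, [&& j < k, a < p j & p j < b]].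

Lemma larger_ltE k a b : a < b -> (forall j : 'I_n, j < k -> p j != b :> nat) ->
  (larger b k < larger a k) = between_before k a b.
Proof.
move=> lt_ab hb; rewrite /larger /larger_set.
have sub : [set j : 'I_n | (j < k) && (b < p j)] \subset
           [set j : 'I_n | (j < k) && (a < p j)].
  by apply/subsetP => j; rewrite !inE => /andP[-> /(ltn_trans lt_ab)].
rewrite (ltn_leqif (subset_leqif_card sub)); apply/subsetPn/existsP.
  case=> j; rewrite !inE => /andP[jk aj]; rewrite jk /= -leqNgt => jb.
  by exists j; rewrite jk aj ltn_neqAle (hb _ jk).
case=> j /and3P[jk aj jb]; exists j; rewrite !inE jk //=.
by rewrite -leqNgt ltnW.
Qed.

End Larger.

Section Window.
Variables (n : nat) (p : 'S_n) (i i1 i2 : 'I_n).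
Hypotheses (def_i1 : nat_of_ord i1 = i.+1) (def_i2 : nat_of_ord i2 = i.+2).

Let A (v : nat) : nat := larger p v i.

Lemma Theta_window1 : Theta p i1 = A (p i1) + (p i1 < p i).
Proof. by rewrite /Theta -/(larger p _ i1) def_i1 larger_succ. Qed.

Lemma Theta_window2 :
  Theta p i2 = A (p i2) + (p i2 < p i) + (p i2 < p i1).
Proof.
by rewrite /Theta -/(larger p _ i2) def_i2 -def_i1 larger_succ def_i1 larger_succ.
Qed.

Lemma window_vals_neq :
  [/\ (p i : nat) != p i1, (p i : nat) != p i2 & (p i1 : nat) != p i2].
Proof. by split; apply: perm_val_neq; rewrite ?def_i1 ?def_i2; lia. Qed.

Lemma window_last_fresh (j : 'I_n) : j < i -> p j != p i2 :> nat.
Proof. by move=> lt_ji; apply: perm_val_neq; rewrite def_i2; lia. Qed.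

Lemma Theta_window_120 :
  ((Theta p i2 < Theta p i) && (Theta p i < Theta p i1)) =
  [&& p i1 < p i, p i < p i2 & between_before p i (p i) (p i2)].
Proof.
have [n01 n02 n12] := window_vals_neq.
rewrite Theta_window1 Theta_window2 Theta_larger.
rewrite (window_120 (A := A) (ex := between_before p i (p i) (p i2)) n01 n02 n12) //.
  by move=> a b; apply: larger_antitone.
by move=> lt; apply: larger_ltE lt window_last_fresh.
Qed.

Lemma Theta_window_021 :
  ((Theta p i < Theta p i2) && (Theta p i2 < Theta p i1)) =
  (p i2 < p i) && between_before p i (p i1) (p i2).
Proof.
have [n01 n02 n12] := window_vals_neq.
rewrite Theta_window1 Theta_window2 Theta_larger.
rewrite (window_021 (A := A) (ex := between_before p i (p i1) (p i2)) n01 n02 n12) //.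
- by move=> a b; apply: larger_antitone.
- by move=> lt; apply: larger_ltE lt window_last_fresh.
by case/existsP=> j /and3P[_ ? ?]; apply: ltn_trans (_ : p j < _).
Qed.

End Window.

Lemma contains_3_214_Theta n (p : 'S_n) : contains_3_214 p = contains_120 (Theta p).
Proof.
apply/existsP/existsP.
  case=> j /existsP[i /existsP[i1 /existsP[i2 /and3P[ji e1 /and4P[e2 l10 l0j lj2]]]]].
  exists i; apply/existsP; exists i1; apply/existsP; exists i2.
  rewrite e1 e2 (Theta_window_120 p (eqP e1) (eqP e2)) l10 (ltn_trans l0j lj2) /=.
  by apply/existsP; exists j; rewrite ji l0j lj2.
case=> i /existsP[i1 /existsP[i2 /and4P[e1 e2 t20 t01]]].
have := Theta_window_120 p (eqP e1) (eqP e2); rewrite t20 t01 /=.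
case/esym/and3P=> l10 _ /existsP[j /and3P[ji l0j lj2]].
exists j; apply/existsP; exists i; apply/existsP; exists i1; apply/existsP; exists i2.
by rewrite ji e1 e2 l10 l0j lj2.
Qed.

Lemma contains_2_413_Theta n (p : 'S_n) : contains_2_413 p = contains_021 (Theta p).
Proof.
apply/existsP/existsP.
  case=> j /existsP[i /existsP[i1 /existsP[i2 /and3P[ji e1 /and4P[e2 l1j lj2 l20]]]]].
  exists i; apply/existsP; exists i1; apply/existsP; exists i2.
  rewrite e1 e2 (Theta_window_021 p (eqP e1) (eqP e2)) l20 /=.
  by apply/existsP; exists j; rewrite ji l1j lj2.
case=> i /existsP[i1 /existsP[i2 /and4P[e1 e2 t02 t21]]].
have := Theta_window_021 p (eqP e1) (eqP e2); rewrite t02 t21 /=.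
case/esym/andP=> l20 /existsP[j /and3P[ji l1j lj2]].
exists j; apply/existsP; exists i; apply/existsP; exists i1; apply/existsP; exists i2.
by rewrite ji e1 e2 l1j lj2 l20.
Qed.

Lemma perm_rank n (p : 'S_n) (i : 'I_n) : nat_of_ord (p i) = #|[set j | p j < p i]|.
Proof.
have -> : [set j | p j < p i] = p @^-1: [set v : 'I_n | v < p i].
  by apply/setP => j; rewrite !inE.
by rewrite card_preimset ?card_ord_lt 1?ltnW //; apply: perm_inj.
Qed.

Lemma perm_order_inj n (p q : 'S_n) :
  (forall i j, (p j < p i) = (q j < q i)) -> p = q.
Proof.
move=> same; apply/permP => i; apply: val_inj => /=.
by rewrite (perm_rank p i) (perm_rank q i); apply: eq_card => j; rewrite !inE same.
Qed.

Section ThetaInjective.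
Variables (n : nat) (p q : 'S_n).

Definition same_order_before (k : nat) : Prop :=
  forall i j : 'I_n, i < k -> j < k -> (p j < p i) = (q j < q i).

(* The earlier entries larger than p i form an upper set of the order on the
   prefix; as p and q induce the same order there, the two sets are nested. *)
Lemma larger_set_nested (i a b : 'I_n) : same_order_before i ->
  a \in larger_set p (p i) i -> a \notin larger_set q (q i) i ->
  b \in larger_set q (q i) i -> b \in larger_set p (p i) i.
Proof.
move=> same; rewrite !inE => /andP[ai pia] /nandP[/negP // | qai] /andP[bi qib].
rewrite bi /=; apply/negP => pib.
have [na nb] : (q i : nat) != q a /\ (p i : nat) != p b.
  by split; apply: perm_val_neq; [move: ai | move: bi]; apply: contraTneq => ->; rewrite ltnn.
have := same a b ai bi; have := na; have := nb; lia.
Qed.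

Lemma same_order_before_succ (k : 'I_n) : same_order_before k ->
  Theta p k = Theta q k -> same_order_before k.+1.
Proof.
move=> same eqT.
have card_eq : #|larger_set p (p k) k| = #|larger_set q (q k) k| := eqT.
have eqS : larger_set p (p k) k = larger_set q (q k) k.
  case: (boolP (larger_set p (p k) k \subset larger_set q (q k) k)).
    by move=> sub; apply/eqP; rewrite eqEcard sub -card_eq leqnn.
  case/subsetPn=> a ap aq.
  have sub : larger_set q (q k) k \subset larger_set p (p k) k.
    by apply/subsetP => b; apply: larger_set_nested ap aq.
  by apply/esym/eqP; rewrite eqEcard sub card_eq leqnn.
have cmp_new (j : 'I_n) : j < k -> (p k < p j) = (q k < q j).
  by move=> jk; have := congr1 (fun S : {set 'I_n} => j \in S) eqS; rewrite !inE jk.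
have flip (r : 'S_n) (j : 'I_n) : j < k -> (r j < r k) = ~~ (r k < r j).
  move=> jk; rewrite -leqNgt ltn_neqAle perm_val_neq //.
  by apply: contraTneq jk => ->; rewrite ltnn.
move=> i j; rewrite !ltnS (leq_eqVlt i) (leq_eqVlt j).
case/orP=> [/eqP/val_inj-> | ik]; case/orP=> [/eqP/val_inj-> | jk].
- by rewrite !ltnn.
- by rewrite (flip p _ jk) (flip q _ jk) cmp_new.
- exact: cmp_new.
- exact: same.
Qed.

End ThetaInjective.

Lemma Theta_inj n (p q : 'S_n) : Theta p =1 Theta q -> p = q.
Proof.
move=> eqT; apply: perm_order_inj => i j.
have same k : k <= n -> same_order_before p q k.
  elim: k => [_ i0 j0 | k IH lt_kn]; first by rewrite ltn0.
  exact: (same_order_before_succ (k := Ordinal lt_kn) (IH (ltnW lt_kn)) (eqT _)).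
exact: same (leqnn n) i j (ltn_ord i) (ltn_ord j).
Qed.

Lemma Theta_le n (p : 'S_n) (i : 'I_n) : Theta p i <= i.
Proof.
rewrite -[leqRHS](card_ord_lt (ltnW (ltn_ord i))).
by apply/subset_leq_card/subsetP => j; rewrite !inE => /andP[].
Qed.

Definition Theta_ffun n (p : 'S_n) : {ffun 'I_n -> 'I_n} :=
  [ffun i => Ordinal (leq_ltn_trans (Theta_le p i) (ltn_ord i))].

Lemma Theta_ffunE n (p : 'S_n) (i : 'I_n) : nat_of_ord (Theta_ffun p i) = Theta p i.
Proof. by rewrite ffunE. Qed.

Lemma Theta_ffun_inj n : injective (@Theta_ffun n).
Proof.
move=> p q eq_pq; apply: Theta_inj => i.
by rewrite -!Theta_ffunE eq_pq.
Qed.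

(* There are n! inversion sequences: position i admits the i+1 values 0..i. *)
Lemma card_invseqs n : #|invseqs n| = n`!.
Proof.
have -> : #|invseqs n| = #|family (fun i : 'I_n => [pred v : 'I_n | v <= i])|.
  by rewrite cardsE; apply: eq_card => e; rewrite !inE.
rewrite card_family foldrE big_map big_enum /= fact_prod big_add1 big_mkord.
apply: eq_bigr => i _; rewrite -[RHS](card_ord_lt (ltn_ord i)).
by apply: eq_card => v; rewrite !inE ltnS.
Qed.

Lemma invseqs_Theta n : invseqs n = [set Theta_ffun p | p in [set: 'S_n]].
Proof.
apply/esym/eqP; rewrite eqEcard card_imset; last exact: Theta_ffun_inj.
rewrite cardsT card_Sn card_invseqs leqnn andbT.
apply/subsetP => _ /imsetP[p _ ->]; rewrite inE; apply/forallP => i.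
by rewrite Theta_ffunE Theta_le.
Qed.

Lemma card_invseqs_Theta n (P : ('I_n -> nat) -> bool) :
  (forall e1 e2, e1 =1 e2 -> P e1 = P e2) ->
  #|[set e in invseqs n | P (fun i => val (e i))]| = #|[set p : 'S_n | P (Theta p)]|.
Proof.
move=> P_ext; rewrite -(card_imset _ (@Theta_ffun_inj n)).
apply: eq_card => e; rewrite invseqs_Theta !inE; apply/andP/imsetP.
  case=> /imsetP[p _ ->] Pp; exists p => //.
  by rewrite inE -(P_ext _ _ (Theta_ffunE p)).
case=> p; rewrite inE => Pp ->; split; first exact: imset_f.
by rewrite (P_ext _ _ (Theta_ffunE p)).
Qed.

Lemma contains_120_ext n (e1 e2 : 'I_n -> nat) :
  e1 =1 e2 -> contains_120 e1 = contains_120 e2.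
Proof.
move=> eq_e; do 3![apply: eq_existsb => ?].
by rewrite !eq_e.
Qed.

Lemma contains_021_ext n (e1 e2 : 'I_n -> nat) :
  e1 =1 e2 -> contains_021 e1 = contains_021 e2.
Proof.
move=> eq_e; do 3![apply: eq_existsb => ?].
by rewrite !eq_e.
Qed.

Theorem mainTheorem19 :
  (forall (n : nat) (p : 'S_n),
      (~~ contains_3_214 p <-> ~~ contains_120 (Theta p)) /\
      (~~ contains_2_413 p <-> ~~ contains_021 (Theta p))) /\
  (forall n : nat,
      #|[set e in invseqs n | ~~ contains_120 (fun i => val (e i))]| =
        #|[set p : 'S_n | ~~ contains_3_214 p]| /\
      #|[set e in invseqs n | ~~ contains_021 (fun i => val (e i))]| =
        #|[set p : 'S_n | ~~ contains_2_413 p]|).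
Proof.
split=> [n p | n]; first by rewrite contains_3_214_Theta contains_2_413_Theta.
rewrite (card_invseqs_Theta (P := fun e => ~~ contains_120 e)); last first.
  by move=> e1 e2 /contains_120_ext ->.
rewrite (card_invseqs_Theta (P := fun e => ~~ contains_021 e)); last first.
  by move=> e1 e2 /contains_021_ext ->.
by split; apply: eq_card => p; rewrite !inE (contains_3_214_Theta, contains_2_413_Theta).
Qed.
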